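(* For any temporal graph $\mathcal G=(V,E,\lambda)$ with lifetime $T_{\max}$ and any parameters $\delta,k\in\mathbb N^+$, the witness complexity of $\mathcal G$ is at most $|E|$.
   Context: A temporal graph $\mathcal G=(V,E,\lambda)$ with lifetime $T_{\max}$ consists of a finite undirected static graph $(V,E)$ and a labeling $\lambda:E\to\{1,\dots,T_{\max}\}$; edge $e$ is present only at time $\lambda(e)$. Infection model with parameter $\delta$: a set of at most $k$ seed infections $S\subseteq V\times[0,T_{\max}]$ is given; a seed $(u,t)$ makes $u$ infected at time $t$; otherwise a susceptible node $u$ becomes infected at time $t$ iff some neighbour $v$ infectious at time $t$ has $\lambda(uv)=t$ (exactly one infector recorded if several exist). A node infected at time $t$ is infectious at times $t+1,\dots,t+\delta$ and resistant afterwards. The infection log records triples $(u,v,t)$ ($u$ infected $v$ at time $t$). A witnessing schedule of length $a$ for $\mathcal G$ is a sequence $S_1,\dots,S_a$ of seed sets of size at most $k$ such that after performing these rounds all labels of $\mathcal G$ are uniquely determined (among labelings of the known static graph) by the infection logs; the witness complexity is the length of a shortest witnessing schedule. *)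

From mathcomp Require Import all_boot.
Unset Printing Implicit Defensive.

(* A temporal graph on a finite vertex type V: edges are 2-element subsets,
   labels lam : {set V} -> nat (only the values on edges matter). *)
Definition simple_edges (V : finType) (E : {set {set V}}) : Prop :=
  forall A, A \in E -> #|A| = 2.

Definition temporal_labeling (V : finType) (E : {set {set V}}) (Tmax : nat)
  (lam : {set V} -> nat) : Prop :=
  forall A, A \in E -> 1 <= lam A <= Tmax.

Definition adj (V : finType) (E : {set {set V}}) (u v : V) : bool :=
  [set u; v] \in E.

Definition seeded (V : finType) (Tmax : nat) (S : {set V * 'I_Tmax.+1})
  (u : V) (t : nat) : Prop :=
  exists i : 'I_Tmax.+1, (u, i) \in S /\ nat_of_ord i = t.

(* u would be infected at time t (if still susceptible): seeded at t, or some
   neighbour v infected at time s (hence infectious at s+1..s+delta) with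
   lam(uv) = t. *)
Definition trigger (V : finType) (E : {set {set V}}) (Tmax delta : nat)
  (lam : {set V} -> nat) (S : {set V * 'I_Tmax.+1}) (it : V -> option nat)
  (u : V) (t : nat) : Prop :=
  seeded V Tmax S u t \/
  exists v s, adj V E u v /\ it v = Some s /\ s < t <= s + delta /\ lam [set u; v] = t.

(* it u = infection time of u (None = never infected): the first trigger time *)
Definition valid_times (V : finType) (E : {set {set V}}) (Tmax delta : nat)
  (lam : {set V} -> nat) (S : {set V * 'I_Tmax.+1}) (it : V -> option nat) : Prop :=
  forall u t, it u = Some t <->
    (trigger V E Tmax delta lam S it u t /\ forall t', t' < t -> ~ trigger V E Tmax delta lam S it u t').

(* par u = recorded infector of u (None for seeds / never infected);
   exactly one infector recorded, chosen arbitrarily among the possible ones *)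
Definition valid_infectors (V : finType) (E : {set {set V}}) (Tmax delta : nat)
  (lam : {set V} -> nat) (S : {set V * 'I_Tmax.+1}) (it : V -> option nat)
  (par : V -> option V) : Prop :=
  forall u, match par u with
  | None => forall t, it u = Some t -> seeded V Tmax S u t
  | Some v => exists t s, it u = Some t /\ ~ seeded V Tmax S u t /\ adj V E u v /\
               it v = Some s /\ s < t <= s + delta /\ lam [set u; v] = t
  end.

Definition infection_log (V : finType) (it : V -> option nat) (par : V -> option V)
  (v u : V) (t : nat) : Prop :=
  par u = Some v /\ it u = Some t.

Definition possible_log (V : finType) (E : {set {set V}}) (Tmax delta : nat)
  (lam : {set V} -> nat) (S : {set V * 'I_Tmax.+1}) (L : V -> V -> nat -> Prop) : Prop :=
  exists it par, valid_times V E Tmax delta lam S it /\ valid_infectors V E Tmax delta lam S it par /\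
    forall v u t, L v u t <-> infection_log V it par v u t.

Definition witnessing_schedule (V : finType) (E : {set {set V}}) (Tmax delta k : nat)
  (lam : {set V} -> nat) (sched : seq {set V * 'I_Tmax.+1}) : Prop :=
  (forall S, S \in sched -> #|S| <= k) /\
  forall lam', temporal_labeling V E Tmax lam' ->
  forall Ls : nat -> V -> V -> nat -> Prop,
    (forall i, i < size sched -> possible_log V E Tmax delta lam (nth set0 sched i) (Ls i)) ->
    (forall i, i < size sched -> possible_log V E Tmax delta lam' (nth set0 sched i) (Ls i)) ->
    forall A, A \in E -> lam' A = lam A.

Definition witness_complexity_le (V : finType) (E : {set {set V}}) (Tmax delta k : nat)
  (lam : {set V} -> nat) (m : nat) : Prop :=
  exists sched, witnessing_schedule V E Tmax delta k lam sched /\ size sched <= m.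

(** One round per edge suffices. For the edge {u, v} with label t, seed u alone
    at time t - 1. Infections only travel forward in time, so every other node
    is infected strictly after t - 1; hence v is infected at time t and its only
    possible infector is u. The log entry (u, v, t) is thus produced, and any
    labeling producing the same log must give the edge {u, v} the label t. *)

From mathcomp Require Import all_boot.
From mathcomp Require Import zify.

Lemma seeded_set1 (V : finType) (Tmax : nat) (u w : V) (i0 : 'I_Tmax.+1) (t : nat) :
  seeded V Tmax [set (u, i0)] w t <-> w = u /\ t = i0.
Proof.
split; first by move=> [i [/set1P [-> ->] <-]].
by move=> [-> ->]; exists i0; rewrite set11.
Qed.

Lemma infection_log_label {V : finType} {E : {set {set V}}} {Tmax delta : nat}
    {lam : {set V} -> nat} {S : {set V * 'I_Tmax.+1}} {it par} {u v : V} {t : nat} :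
  valid_infectors V E Tmax delta lam S it par ->
  infection_log V it par u v t -> lam [set v; u] = t.
Proof.
move=> /(_ v) + [par_v it_v]; rewrite par_v.
by move=> [t' [s [+ [_ [_ [_ [_ ->]]]]]]]; rewrite it_v => -[].
Qed.

Section SingleSeed.

Context {V : finType} {E : {set {set V}}} {Tmax delta : nat} {lam : {set V} -> nat}.
Context {u : V} {i0 : 'I_Tmax.+1} {it : V -> option nat}.
Hypothesis it_valid : valid_times V E Tmax delta lam [set (u, i0)] it.

Lemma infection_time_after_seed (w : V) (t : nat) :
  it w = Some t -> (w = u /\ t = i0) \/ i0 < t.
Proof.
elim/ltn_ind: t w => t IH w /it_valid [+ _] => -[/seeded_set1 seed_w | ]; first by left.
move=> [x [s [_ [it_x [/andP [lt_st _] _]]]]]; right.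
by case: (IH s lt_st x it_x) => [[_ eq_s] | lt_i0s]; lia.
Qed.

Lemma seed_infection_time : it u = Some (i0 : nat).
Proof.
apply/it_valid; split; first by left; apply/seeded_set1.
move=> t' lt_t'i0 [/seeded_set1 [_ eq_t'] | [x [s [_ [it_x [/andP [lt_st' _] _]]]]]].
  by lia.
by case: (infection_time_after_seed _ _ it_x) => [[_ eq_s] | lt_i0s]; lia.
Qed.

Lemma seed_neighbour_infection_time {v : V} :
  0 < delta -> u != v -> [set u; v] \in E -> lam [set u; v] = i0.+1 ->
  it v = Some i0.+1.
Proof.
move=> delta_gt0 neq_uv E_uv lam_uv.
apply/it_valid; split.
  right; exists u, i0; rewrite /adj setUC E_uv seed_infection_time lam_uv.
  by split=> //; split=> //; split=> //; lia.
move=> t' lt_t' [/seeded_set1 [eq_vu _] | [x [s [_ [it_x [/andP [lt_st' _] lam_vx]]]]]].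
  by move: neq_uv; rewrite eq_vu eqxx.
case: (infection_time_after_seed _ _ it_x) => [[eq_xu _] | lt_i0s]; last by lia.
by move: lam_vx; rewrite eq_xu setUC lam_uv; lia.
Qed.

Lemma seed_neighbour_infector {par : V -> option V} {v : V} :
  valid_infectors V E Tmax delta lam [set (u, i0)] it par ->
  u != v -> it v = Some i0.+1 -> par v = Some u.
Proof.
move=> /(_ v) + neq_uv it_v; case: (par v) => [x | /(_ _ it_v) /seeded_set1 [eq_vu _]].
  move=> [t [s [+ [_ [_ [it_x [/andP [lt_st _] _]]]]]]]; rewrite it_v => -[eq_t].
  by case: (infection_time_after_seed _ _ it_x) => [[-> _] // | lt_i0s]; lia.
by move: neq_uv; rewrite eq_vu eqxx.
Qed.

End SingleSeed.

Definition edge_seed (V : finType) (Tmax : nat) (lam : {set V} -> nat) (A : {set V}) :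
    {set V * 'I_Tmax.+1} :=
  if [pick x in A] is Some x then [set (x, inord (lam A).-1)] else set0.

Lemma edge_seedE {V : finType} (Tmax : nat) (lam : {set V} -> nat) (A : {set V}) :
  #|A| = 2 -> exists u v, [/\ u != v, A = [set u; v] &
    edge_seed V Tmax lam A = [set (u, inord (lam A).-1)]].
Proof.
move/eqP/cards2P=> [x [y [neq_xy eq_A]]]; rewrite /edge_seed.
case: pickP => [u | /(_ x)]; last by rewrite eq_A set21.
rewrite eq_A => /set2P [-> | ->]; first by exists x, y.
by exists y, x; rewrite setUC eq_sym.
Qed.

Definition edge_schedule (V : finType) (E : {set {set V}}) (Tmax : nat)
    (lam : {set V} -> nat) : seq {set V * 'I_Tmax.+1} :=
  [seq edge_seed V Tmax lam A | A <- enum E].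

Lemma edge_schedule_witnessing (V : finType) (E : {set {set V}}) (Tmax delta k : nat)
    (lam : {set V} -> nat) :
  simple_edges V E -> temporal_labeling V E Tmax lam -> 0 < delta -> 0 < k ->
  witnessing_schedule V E Tmax delta k lam (edge_schedule V E Tmax lam).
Proof.
move=> E_simple lam_ok delta_gt0 k_gt0; split.
  move=> S /mapP [A /[!mem_enum] /E_simple /(edge_seedE Tmax lam) [u [v [_ _ ->]]] ->].
  by rewrite cards1.
move=> lam' _ Ls logs logs' A E_A.
pose i := index A (enum E).
have i_lt : i < size (edge_schedule V E Tmax lam).
  by rewrite size_map index_mem mem_enum.
have nth_i : nth set0 (edge_schedule V E Tmax lam) i = edge_seed V Tmax lam A.
  by rewrite (nth_map set0) ?nth_index ?mem_enum // -(size_map (edge_seed V Tmax lam)).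
have [u [v [neq_uv eq_A seed_A]]] := edge_seedE Tmax lam A (E_simple A E_A).
have lam_A : lam A = (inord (lam A).-1 : 'I_Tmax.+1).+1.
  by move: (lam_ok A E_A) => /andP [lam_ge1 lam_le]; rewrite inordK; lia.
move: (logs i i_lt) (logs' i i_lt); rewrite nth_i seed_A.
move=> [it [par [it_ok [par_ok log_eq]]]] [it' [par' [_ [par'_ok log'_eq]]]].
have E_uv : [set u; v] \in E by rewrite -eq_A.
have lam_uv : lam [set u; v] = (inord (lam A).-1 : 'I_Tmax.+1).+1 by rewrite -eq_A.
have it_v := seed_neighbour_infection_time it_ok delta_gt0 neq_uv E_uv lam_uv.
have par_v := seed_neighbour_infector it_ok par_ok neq_uv it_v.
have /log'_eq log'_uv : Ls i u v (lam A).
  by apply/log_eq; split=> //; rewrite it_v -lam_A.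
by rewrite -(infection_log_label par'_ok log'_uv) eq_A setUC.
Qed.

Theorem mainTheorem12 (V : finType) (E : {set {set V}}) (Tmax : nat)
  (lam : {set V} -> nat) (delta k : nat) :
  simple_edges V E -> temporal_labeling V E Tmax lam -> 0 < delta -> 0 < k ->
  witness_complexity_le V E Tmax delta k lam #|E|.
Proof.
move=> E_simple lam_ok delta_gt0 k_gt0.
exists (edge_schedule V E Tmax lam); split.
  exact: edge_schedule_witnessing.
by rewrite size_map -cardE.
Qed.
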